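(* For any complex number $a\in\mathbb{C}$, the spectral density function of $z-a\in\mathbb{C}[\mathbb{Z}]=\mathbb{C}[z,z^{-1}]$ satisfies \[ F\bigl(r_{z-a}^{(2)}\bigr)(\lambda)\le\frac{8\sqrt3}{\sqrt{47}}\cdot\lambda\quad\text{for all }\lambda\in[0,\infty). \]
   Context: For $q\in\mathbb{C}[z,z^{-1}]$, $r_q^{(2)}\colon L^2(\mathbb{Z})\to L^2(\mathbb{Z})$ is multiplication by $q$, and its spectral density function is $F(r_q^{(2)})(\lambda)=\mu_{S^1}\bigl(\{z\in S^1: |q(z)|\le\lambda\}\bigr)$ with $\mu_{S^1}$ the normalized Haar measure on the unit circle. *)

From HB Require Import structures.
From mathcomp Require Import all_boot all_order all_algebra.
From mathcomp Require Import all_classical all_reals all_analysis.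
From mathcomp Require Import complex.
Set Implicit Arguments. Unset Strict Implicit. Unset Printing Implicit Defensive.
Import Order.TTheory GRing.Theory Num.Theory.
Local Open Scope classical_set_scope.
Local Open Scope ring_scope.
Local Open Scope complex_scope.

Definition circ (R : realType) (t : R) : R[i] :=
  (cos (2 * pi * t)) +i* (sin (2 * pi * t)).

(* Spectral density function of r_q^{(2)} (multiplication by q on L^2(Z)):
   F(lambda) = mu_{S^1}({z in S^1 : |q(z)| <= lambda}), where the normalized
   Haar measure on S^1 is the image of Lebesgue measure on [0,1) under
   t |-> e^{2 pi i t}. Here q is (the function on the circle induced by) the
   Laurent polynomial. *)
Definition spectral_density (R : realType) (q : R[i] -> R[i]) (lam : R)
  : \bar R :=
  (@lebesgue_measure R) ([set t : R | 0 <= t < 1] `&`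
                         [set t : R | `|q (circ t)| <= lam%:C]).

(* Two points e^{2 pi i t}, e^{2 pi i t0} of the sublevel set {|z - a| <= lam}
   are at distance at most 2 lam.  The chord between them is 2 |sin (pi (t - t0))|,
   and by Jordan's inequality |sin (pi u)| >= 2 |u| for |u| <= 1/2, so t is within
   lam/2 of t0 modulo 1.  Inside [0, 1) this confines t to three intervals of total
   length 2 lam, and 2 <= 8 sqrt 3 / sqrt 47. *)

From HB Require Import structures.
From mathcomp Require Import all_boot all_order all_algebra.
From mathcomp Require Import all_classical all_reals all_analysis.
From mathcomp Require Import complex.
From mathcomp Require Import ring lra.
Set Implicit Arguments. Unset Strict Implicit. Unset Printing Implicit Defensive.
Import Order.TTheory GRing.Theory Num.Theory.
Local Open Scope ring_scope.

Section Jordan.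
Variable R : realType.

Lemma cos_nonincreasing_0pi (x y : R) : 0 <= x -> x <= y -> y <= pi -> cos y <= cos x.
Proof.
move=> x0 xy ypi; case: ltgtP xy => // [lt_xy|->] _; last by [].
have y0 : 0 <= y := le_trans x0 (ltW lt_xy).
have xpi : x <= pi := le_trans (ltW lt_xy) ypi.
by apply: ltW; rewrite ltr_cos // in_itv /= ?x0 ?y0.
Qed.

Lemma jordan_inequality (x : R) : 0 <= x -> x <= pi / 2 -> 2 / pi * x <= sin x.
Proof.
move=> x0 xpi2; have pi_gt0 := pi_gt0 R; set k := 2 / pi.
have pi2_le_pi : pi / 2 <= pi :> R by lra.
have mvt (u v : R) : u <= v -> exists2 c, c \in `[u, v] &
    (sin v - k * v) - (sin u - k * u) = (cos c - k) * (v - u).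
  move=> uv; apply: (MVT_segment (f := fun z => sin z - k * z)) => // [z _|].
    by rewrite -[X in cos z - X]mulr1; apply: is_deriveB.
  by apply: derivable_within_continuous => z _; apply: ex_derive; apply: is_deriveB.
have [c1 + E1] := mvt 0 x x0; rewrite in_itv /= => /andP [c1_ge0 c1_le].
have [c2 + E2] := mvt x (pi / 2) xpi2; rewrite in_itv /= => /andP [c2_ge c2_le].
rewrite sin0 mulr0 subr0 subr0 in E1.
have kpi2 : k * (pi / 2) = 1 by rewrite /k mulrA divfK ?gt_eqF // divff.
rewrite sin_pihalf kpi2 subrr sub0r in E2.
(* The slope [cos - k] decreases on [0, pi] and c1 <= x <= c2: either the slope
   at c1 is >= 0, or the slope at c2 is < 0. *)
rewrite -subr_ge0; case: (lerP k (cos c1)) => [kc1|c1k].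
  by rewrite E1 mulr_ge0 // subr_ge0.
have c2k : cos c2 < k.
  apply: le_lt_trans c1k; apply: cos_nonincreasing_0pi => //; first exact: le_trans c2_ge.
  exact: le_trans pi2_le_pi.
by rewrite -oppr_le0 E2 mulr_le0_ge0 ?subr_ge0 // subr_le0 ltW.
Qed.

Lemma norm_sin_pi_ge (u : R) : `|u| <= 1 / 2 -> 2 * `|u| <= `|sin (pi * u)|.
Proof.
have pi_gt0 := pi_gt0 R.
wlog u0 : u / 0 <= u => [base|]; last first.
  rewrite ger0_norm // => u_le; apply: le_trans (ler_norm _).
  have := jordan_inequality (mulr_ge0 (ltW pi_gt0) u0) ltac:(nra).
  by rewrite mulrA divfK ?gt_eqF.
have [|u_lt0] := leP 0 u; first exact: base.
by have := base (- u) ltac:(lra); rewrite mulrN sinN !normrN.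
Qed.

Lemma norm_sin_piD1 (u : R) : `|sin (pi * (u + 1))| = `|sin (pi * u)|.
Proof. by rewrite mulrDr mulr1 sinDpi normrN. Qed.

Lemma norm_sin_pi_le_mod1 (u lam : R) : -1 < u < 1 -> `|sin (pi * u)| <= lam ->
  [\/ `|u| <= lam / 2, `|u - 1| <= lam / 2 | `|u + 1| <= lam / 2].
Proof.
move=> /andP [u_gtN1 u_lt1] sin_le.
have near (v : R) : `|v| <= 1 / 2 -> `|sin (pi * v)| <= lam -> `|v| <= lam / 2.
  by move=> /norm_sin_pi_ge v_le /(le_trans v_le); lra.
have [u_le|u_gt] := leP `|u| (1 / 2); first by apply: Or31; apply: near.
have [u0|u0] := leP 0 u.
  apply: Or32; apply: near; last by rewrite -norm_sin_piD1 subrK.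
  by rewrite ger0_norm // in u_gt; rewrite ler_norml; lra.
apply: Or33; apply: near; first by rewrite ltr0_norm // in u_gt; rewrite ler_norml; lra.
by rewrite norm_sin_piD1.
Qed.

End Jordan.

Section Circle.
Variable R : realType.
Local Open Scope complex_scope.

Lemma norm_circB (t s : R) : `|circ t - circ s| = (2 * `|sin (pi * (t - s))|)%:C.
Proof.
rewrite normc_def /circ /=; congr (_%:C).
set A := 2 * pi * t; set B := 2 * pi * s.
have AB : A - B = (pi * (t - s)) *+ 2 by rewrite /A /B mulr2n; ring.
have half_angle : cos (A - B) = 1 - 2 * sin (pi * (t - s)) ^+ 2.
  by rewrite AB cos_mulr2n cos2sin2; ring.
have -> : (cos A - cos B) ^+ 2 + (sin A + - sin B) ^+ 2 = (2 * sin (pi * (t - s))) ^+ 2.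
  transitivity ((cos A ^+ 2 + sin A ^+ 2) + (cos B ^+ 2 + sin B ^+ 2) - 2 * cos (A - B)).
    by rewrite cosB; ring.
  by rewrite !cos2Dsin2 half_angle; ring.
by rewrite sqrtr_sqr normrM ger0_norm.
Qed.

Lemma circ_sublevel_cover (a : R[i]) (lam t t0 : R) : 0 <= t < 1 -> 0 <= t0 < 1 ->
  `|circ t - a| <= lam%:C -> `|circ t0 - a| <= lam%:C ->
  [\/ t0 - lam / 2 <= t <= t0 + lam / 2,
      t0 + 1 - lam / 2 <= t <= t0 + 1 |
      t0 - 1 <= t <= t0 - 1 + lam / 2].
Proof.
move=> /andP [t_ge0 t_lt1] /andP [t0_ge0 t0_lt1] t_near t0_near.
have : `|circ t - circ t0| <= (2 * lam)%:C.
  apply: le_trans (ler_distD a _ _) _.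
  by rewrite [`|a - _|]distrC mulr_natl mulr2n rmorphD lerD.
rewrite norm_circB lecR ler_pM2l // => /norm_sin_pi_le_mod1.
have : -1 < t - t0 < 1 by apply/andP; split; lra.
move=> /[swap] /[apply] -[] /ler_normlP [h1 h2].
- by apply: Or31; apply/andP; split; lra.
- by apply: Or32; apply/andP; split; lra.
- by apply: Or33; apply/andP; split; lra.
Qed.

End Circle.

Section SpectralDensity.
Variable R : realType.
Local Open Scope classical_set_scope.
Local Open Scope ereal_scope.

Lemma lebesgue_measure_itvcc_le (x y : R) : (x <= y)%R ->
  lebesgue_measure [set` `[x, y]%R] <= (y - x)%:E.
Proof.
by move=> xy; rewrite lebesgue_measure_itv /=; case: ifP; rewrite // lee_fin subr_ge0.
Qed.

Lemma spectral_density_circB_le (a : R[i]) (lam : R) : (0 <= lam)%R ->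
  spectral_density (fun z : R[i] => (z - a)%R) lam <= (2 * lam)%:E.
Proof.
move=> lam_ge0; rewrite /spectral_density; set S := _ `&` _.
have [[t0 [/= t0_itv t0_near]]|S0] := pselect (exists t0, S t0); last first.
  have -> : S = set0 by apply/seteqP; split => // t St; apply: S0; exists t.
  by rewrite measure0 lee_fin mulr_ge0.
pose I1 : set R := [set` `[t0 - lam / 2, t0 + lam / 2]%R].
pose I2 : set R := [set` `[t0 + 1 - lam / 2, t0 + 1]%R].
pose I3 : set R := [set` `[t0 - 1, t0 - 1 + lam / 2]%R].
have S_sub : S `<=` I1 `|` I2 `|` I3.
  move=> t [/= t_itv t_near].
  by case: (circ_sublevel_cover t_itv t0_itv t_near t0_near) => h;
    [left; left|left; right|right]; rewrite /I1 /I2 /I3 /= in_itv /= h.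
apply: (@le_trans _ _ (lebesgue_measure (I1 `|` I2 `|` I3))); first exact: le_mu_ext.
have mI1 : measurable I1 := measurable_itv _.
have mI2 : measurable I2 := measurable_itv _.
have mI3 : measurable I3 := measurable_itv _.
apply: le_trans (measureU2 lebesgue_measure (measurableU _ _ mI1 mI2) mI3) _.
apply: le_trans (leeD (measureU2 lebesgue_measure mI1 mI2) (lexx _)) _.
have lam2_ge0 : (0 <= lam / 2)%R by rewrite divr_ge0.
apply: le_trans (leeD (leeD (lebesgue_measure_itvcc_le _) (lebesgue_measure_itvcc_le _))
                      (lebesgue_measure_itvcc_le _)) _.
- by rewrite lerD2l; lra.
- by rewrite lerBlDr; lra.
- by rewrite lerDl.
by rewrite -!EFinD lee_fin; lra.
Qed.

End SpectralDensity.

Lemma two_le_8sqrt3_div_sqrt47 (R : realType) : 2 <= 8 * Num.sqrt 3 / Num.sqrt 47 :> R.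
Proof.
have sqrt47_gt0 : 0 < Num.sqrt 47 :> R by rewrite sqrtr_gt0.
rewrite ler_pdivlMr // -ler_sqr ?nnegrE ?mulr_ge0 ?sqrtr_ge0 //.
rewrite !exprMn !sqr_sqrtr // !expr2; lra.
Qed.

Theorem lemma2p2 (R : realType) (a : R[i]) (lam : R) :
  0 <= lam ->
  (spectral_density (fun z : R[i] => (z - a)%R) lam <=
   ((8 * Num.sqrt 3 / Num.sqrt 47) * lam)%R%:E)%E.
Proof.
move=> lam_ge0; apply: le_trans (spectral_density_circB_le a lam_ge0) _.
by rewrite lee_fin ler_wpM2r // two_le_8sqrt3_div_sqrt47.
Qed.
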